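(* Let $p,q\in(0,1)$ and define $$h(p,q)=4p^2q^4-12p^2q^3+12p^2q^2-4p^2q-2pq^4+8pq^3-12pq^2+8pq,$$ which equals $\mathbb{E}^{(1,1)}_{p,q}[Z_1]=\mathbb{E}[\min(U,V)]$ for independent $U\sim\mathrm{Bin}(4,q)$ and $V\sim\mathrm{Bin}(2,p)$. If $h(p,q)>1$, then $\mathbb{P}^{(1,1)}_{p,q}(\tau=+\infty)>0$.
   Context: Cooperative model: for $p,q\in(0,1)$, a Markov chain $(X_n,Y_n)_{n\ge0}$ on $\mathbb{N}^2$ whose transition law from state $(x,y)$ is $\mu_{(x,y)}=\mathrm{Bin}(2,q)^{*(x+y)}\otimes\mathrm{Bin}(2,p)^{*\min(x,y)}$, i.e. given the past, $X_{n+1}\sim\mathrm{Bin}(2(X_n+Y_n),q)$ and $Y_{n+1}\sim\mathrm{Bin}(2\min(X_n,Y_n),p)$ are independent. $\mathbb{P}^{(x,y)}_{p,q}$ (expectation $\mathbb{E}^{(x,y)}_{p,q}$) denotes the law of this process started from $(x,y)$. $Z_n=\min(X_n,Y_n)$ and $\tau=\inf\{n\ge0: Z_n=0\}$. *)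

From HB Require Import structures.
From mathcomp Require Import all_boot all_order all_algebra.
From mathcomp Require Import all_classical all_reals all_analysis.
Set Implicit Arguments. Unset Strict Implicit. Unset Printing Implicit Defensive.
Import Order.TTheory GRing.Theory Num.Theory.
Local Open Scope ring_scope.

(* Probability mass function of Bin(n, r) at k (zero when k > n, since 'C(n,k) = 0). *)
Definition binom_pmf (R : realType) (n : nat) (r : R) (k : nat) : R :=
  ('C(n, k))%:R * r ^+ k * (1 - r) ^+ (n - k).

Definition coop_kernel (R : realType) (p q : R) (s s' : nat * nat) : R :=
  binom_pmf (2 * (s.1 + s.2)) q s'.1 * binom_pmf (2 * minn s.1 s.2) p s'.2.

Definition hpq (R : realType) (p q : R) : R :=
  4 * p^+2 * q^+4 - 12 * p^+2 * q^+3 + 12 * p^+2 * q^+2 - 4 * p^+2 * q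
  - 2 * p * q^+4 + 8 * p * q^+3 - 12 * p * q^+2 + 8 * p * q.

From HB Require Import structures.
From mathcomp Require Import all_boot all_order all_algebra.
From mathcomp Require Import all_classical all_reals all_analysis.
From mathcomp Require Import ring lra zify.
Import Order.TTheory GRing.Theory Num.Theory.
Local Open Scope classical_set_scope.
Local Open Scope ring_scope.

(* From (1, 1), Z_1 = min(U, V) with U ~ Bin(4, q), V ~ Bin(2, p) takes the values
   0, 1, 2, and E Z_1 = h > 1 forces its generating function G to have a fixed point
   e < 1.  From a state with min(x, y) = z, Z_1 dominates min(U_z, V_z) with
   U_z ~ Bin(4z, q), V_z ~ Bin(2z, p), and by superadditivity of min,
   E[e ^ Z_1] <= G(e) ^ z <= e ^ z.  So 1 - e ^ Z is subharmonic and vanishes on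
   extinction; summing over cylinder sets gives P(Z_1, ..., Z_j > 0) >= 1 - e for
   every j, and continuity from above gives P(tau = oo) >= 1 - e > 0. *)

Section BinomialMean.
Local Set Implicit Arguments.
Local Unset Strict Implicit.
Variable R : realType.
Implicit Types (r c : R) (f g : nat -> R).

Definition bin_mean n r f := \sum_(a < n.+1) binom_pmf n r a * f a.

Lemma eq_bin_mean n r f g : f =1 g -> bin_mean n r f = bin_mean n r g.
Proof. by move=> fg; apply: eq_bigr => a _; rewrite fg. Qed.

Lemma bin_mean0 r f : bin_mean 0 r f = f 0%N.
Proof. by rewrite /bin_mean big_ord1 /binom_pmf bin0 !expr0 !mul1r. Qed.

Lemma bin_meanS n r f :
  bin_mean n.+1 r f = bin_mean n r (fun a => (1 - r) * f a + r * f a.+1).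
Proof.
rewrite /bin_mean /binom_pmf big_ord_recl /= bin0 subn0 expr0 mulr1.
under eq_bigr => i _ do rewrite binS natrD !mulrDl subSS.
rewrite big_split /= addrA.
under [in RHS]eq_bigr => i _ do rewrite mulrDr.
rewrite big_split /=; congr (_ + _); last first.
  by apply: eq_bigr => i _; rewrite exprS; ring.
rewrite big_ord_recr /= bin_small // !mul0r addr0.
rewrite big_ord_recl /= bin0 subn0 expr0 !mul1r exprS.
congr (_ + _); first ring.
apply: eq_bigr => i _; rewrite /bump /= -(subnSK (ltn_ord i)) exprS; ring.
Qed.

Lemma bin_meanD n m r f :
  bin_mean (n + m) r f = bin_mean n r (fun a => bin_mean m r (fun b => f (a + b)%N)).
Proof.
elim: m f => [|m IH] f.
  by rewrite addn0; apply: eq_bin_mean => a; rewrite bin_mean0 addn0.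
rewrite addnS bin_meanS IH; apply: eq_bin_mean => a.
by rewrite bin_meanS; apply: eq_bin_mean => b; rewrite addnS.
Qed.

Lemma bin_mean_cst n r c : bin_mean n r (fun=> c) = c.
Proof.
elim: n => [|n IH]; first by rewrite bin_mean0.
by rewrite bin_meanS -[RHS]IH; apply: eq_bin_mean => a; ring.
Qed.

Lemma binom_pmf_ge0 n r a : 0 <= r <= 1 -> 0 <= binom_pmf n r a.
Proof.
by case/andP=> r0 r1; rewrite /binom_pmf !mulr_ge0 // exprn_ge0 // subr_ge0.
Qed.

Lemma ler_bin_mean n r f g : 0 <= r <= 1 -> (forall a, f a <= g a) ->
  bin_mean n r f <= bin_mean n r g.
Proof. by move=> r01 fg; apply: ler_sum => a _; rewrite ler_wpM2l ?binom_pmf_ge0. Qed.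

Lemma bin_mean_ge0 n r f : 0 <= r <= 1 -> (forall a, 0 <= f a) -> 0 <= bin_mean n r f.
Proof. by move=> r01 f0; rewrite -(bin_mean_cst n r 0); apply: ler_bin_mean. Qed.

Lemma bin_meanZ n r c f : bin_mean n r (fun a => c * f a) = c * bin_mean n r f.
Proof. by rewrite /bin_mean mulr_sumr; apply: eq_bigr => a _; ring. Qed.

Lemma bin_meanBl n r c f : bin_mean n r (fun a => c - f a) = c - bin_mean n r f.
Proof.
by rewrite -{2}(bin_mean_cst n r c) /bin_mean -sumrB; apply: eq_bigr => a _; ring.
Qed.

Lemma exchange_bin_mean n m r s (F : nat -> nat -> R) :
  bin_mean n r (fun a => bin_mean m s (F a)) =
  bin_mean m s (fun b => bin_mean n r (F^~ b)).
Proof.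
rewrite /bin_mean; under eq_bigr do rewrite mulr_sumr.
rewrite exchange_big /=; apply: eq_bigr => b _; rewrite mulr_sumr.
by apply: eq_bigr => a _; ring.
Qed.

End BinomialMean.

Section MinGeneratingFunction.
Local Set Implicit Arguments.
Local Unset Strict Implicit.
Variables (R : realType) (p q e : R).

(* E[e ^ min(U, V)] for independent U ~ Bin(4m, q) and V ~ Bin(2m, p); for
   m = 1 this is the generating function of Z_1 under P^(1,1). *)
Definition min_pgf (m : nat) :=
  bin_mean (4 * m)%N q (fun a => bin_mean (2 * m)%N p (fun b => e ^+ minn a b)).

Definition prob_min0 := 1 - (1 - (1 - q) ^+ 4) * (1 - (1 - p) ^+ 2).
Definition prob_min2 := p ^+ 2 * (1 - (1 - q) ^+ 4 - 4 * q * (1 - q) ^+ 3).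

(* Z_1 takes the values 0, 1, 2 with probabilities prob_min0,
   1 - prob_min0 - prob_min2, prob_min2. *)
Lemma min_pgf1_subr : min_pgf 1 - e = (e - 1) * (prob_min2 * e - prob_min0).
Proof.
rewrite /min_pgf /bin_mean /binom_pmf !muln1 !big_ord_recr !big_ord0 /= /minn /=.
rewrite (_ : 'C(4, 1) = 4) // (_ : 'C(4, 2) = 6) // (_ : 'C(4, 3) = 4) //.
rewrite (_ : 'C(2, 1) = 2) // !binn !bin0 /prob_min0 /prob_min2; ring.
Qed.

Lemma hpq_subr1 : hpq p q - 1 = prob_min2 - prob_min0.
Proof. by rewrite /hpq /prob_min2 /prob_min0; ring. Qed.

Hypotheses (p01 : 0 <= p <= 1) (q01 : 0 <= q <= 1) (e0 : 0 <= e) (e1 : e <= 1).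

Lemma min_pgf_ge0 m : 0 <= min_pgf m.
Proof. by apply: bin_mean_ge0 => // a; apply: bin_mean_ge0 => // b; exact: exprn_ge0. Qed.

(* Superadditivity of min: splitting Bin(4(m+1), q) and Bin(2(m+1), p) into
   a Bin(4m, q) and a Bin(4, q) part, resp. Bin(2m, p) and Bin(2, p). *)
Lemma min_pgf_le_expr m : min_pgf m <= min_pgf 1 ^+ m.
Proof.
elim: m => [|m IH]; first by rewrite /min_pgf !muln0 !bin_mean0 expr0.
have -> : min_pgf m.+1 = bin_mean (4 * m)%N q (fun a => bin_mean 4 q (fun u =>
    bin_mean (2 * m)%N p (fun b => bin_mean 2 p (fun v => e ^+ minn (a + u) (b + v))))).
  rewrite /min_pgf mulnSr bin_meanD; apply: eq_bin_mean => a.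
  by apply: eq_bin_mean => u; rewrite mulnSr bin_meanD.
apply: (@le_trans _ _ (bin_mean (4 * m)%N q (fun a =>
    bin_mean (2 * m)%N p (fun b => e ^+ minn a b * min_pgf 1)))).
  apply: ler_bin_mean => // a; rewrite exchange_bin_mean.
  apply: ler_bin_mean => // b; rewrite /min_pgf !muln1 -bin_meanZ.
  apply: ler_bin_mean => // u; rewrite -bin_meanZ.
  apply: ler_bin_mean => // v; rewrite -exprD ler_wiXn2l //; lia.
rewrite exprS.
under eq_bin_mean => a do rewrite (eq_bin_mean _ _ (fun b => mulrC _ _)) bin_meanZ.
by rewrite bin_meanZ ler_wpM2l ?min_pgf_ge0.
Qed.

Lemma kernel_min_pgf_le (x y : nat) : min_pgf 1 <= e ->
  bin_mean (2 * (x + y))%N q (fun a => bin_mean (2 * minn x y)%N p (fun b => e ^+ minn a b))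
  <= e ^+ minn x y.
Proof.
move=> pgf1_le; set z := minn x y.
have -> : (2 * (x + y) = 4 * z + (2 * (x + y) - 4 * z))%N by rewrite /z; lia.
rewrite bin_meanD; apply: (@le_trans _ _ (min_pgf z)).
  apply: ler_bin_mean => // a.
  rewrite -[leRHS](bin_mean_cst (2 * (x + y) - 4 * z) q).
  apply: ler_bin_mean => // c; apply: ler_bin_mean => // b.
  rewrite ler_wiXn2l //; lia.
apply: (le_trans (min_pgf_le_expr z)); rewrite lerXn2r ?nnegrE ?min_pgf_ge0 //.
Qed.

End MinGeneratingFunction.

(* When h > 1 the fixed point of the generating function of Z_1 in [0, 1)
   is prob_min0 / prob_min2. *)
Lemma min_pgf_fixed_point {R : realType} {p q : R} :
  0 < p < 1 -> 0 < q < 1 -> 1 < hpq p q ->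
  exists2 e, 0 <= e < 1 & min_pgf p q e 1 <= e.
Proof.
case/andP=> p0 p1 /andP[q0 q1] h_gt1.
have lt02 : prob_min0 p q < prob_min2 p q by rewrite -subr_gt0 -hpq_subr1 subr_gt0.
have ge00 : 0 <= prob_min0 p q.
  rewrite subr_ge0 mulr_ile1 // ?subr_ge0 ?lerBlDr ?lerDl ?exprn_ge0 ?exprn_ile1 //;
    lra.
have gt02 : 0 < prob_min2 p q by apply: le_lt_trans lt02.
exists (prob_min0 p q / prob_min2 p q).
  by rewrite divr_ge0 ?(ltW gt02) //= ltr_pdivrMr // mul1r.
by rewrite -subr_le0 min_pgf1_subr (mulrC (prob_min2 p q)) divfK ?lt0r_neq0 // subrr mulr0.
Qed.

Lemma measure_bigsetU_fibres d (T : measurableType d) (R : realType)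
    (mu : {measure set T -> \bar R}) (f : T -> nat * nat) (E : nat -> nat -> set T) N M :
  (forall a b, measurable (E a b)) ->
  (forall a b, E a b `<=` f @^-1` [set (a, b)]) ->
  mu (\big[setU/set0]_(a < N) \big[setU/set0]_(b < M) E a b)
  = (\sum_(a < N) \sum_(b < M) mu (E a b))%E.
Proof.
move=> mE E_fibre.
rewrite (@measure_bigsetU _ _ _ mu (fun a => \big[setU/set0]_(b < M) E a b)) //.
- apply: eq_bigr => a _; rewrite measure_bigsetU // => b b' _ _.
  by case=> w [/E_fibre /= + /E_fibre /=] => -> [].
- by move=> a; apply: bigsetU_measurable.
move=> a a' _ _ [w []]; rewrite -!bigcup_seq.
by case=> [b _ /E_fibre /= +] [b' _ /E_fibre /=] => -> [].
Qed.

Lemma nonincreasing_bigcap_ge d (T : measurableType d) (R : realType)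
    (P : probability T R) (F : nat -> set T) (c : \bar R) :
  (forall n, measurable (F n)) -> nonincreasing_seq F ->
  (forall n, c <= P (F n))%E -> (c <= P (\bigcap_n F n))%E.
Proof.
move=> mF F_decr F_ge.
have mFinf : measurable (\bigcap_n F n) by exact: bigcapT_measurable.
have F0_fin : (P (F 0%N) < +oo)%E.
  by rewrite (le_lt_trans (probability_le1 P (mF 0%N))) ?ltey.
have F_cvg := nonincreasing_cvg_mu F0_fin mF mFinf F_decr.
by rewrite -(cvg_lim _ F_cvg) //; apply: lime_ge; [exact: cvgP F_cvg|exact: nearW].
Qed.

Section Events.
Local Set Implicit Arguments.
Local Unset Strict Implicit.
Variables (d : measure_display) (T : measurableType d) (X Y : nat -> T -> nat).
Hypotheses (mX : forall n k, measurable [set w | X n w = k])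
  (mY : forall n k, measurable [set w | Y n w = k]).

Definition cylinder k (s : nat -> nat * nat) :=
  [set w | forall i, (i <= k)%N -> (X i w, Y i w) = s i].

Definition alive i := [set w | (0 < minn (X i w) (Y i w))%N].

Definition alive_between k j := [set w | forall i, (k < i <= k + j)%N -> alive i w].

Lemma alive_between0 k : alive_between k 0 = setT.
Proof. by apply/seteqP; split => // w _ i; rewrite addn0; lia. Qed.

Lemma alive_betweenS k j :
  alive_between k j.+1 = alive k.+1 `&` alive_between k.+1 j.
Proof.
apply/seteqP; split => w.
  by move=> alive_w; split => [|i ik]; apply: alive_w; lia.
move=> [alive_k1 alive_w] i ik; have [->|ne] := eqVneq i k.+1; first exact: alive_k1.
by apply: alive_w; lia.
Qed.

Lemma measurable_state i s : measurable [set w | (X i w, Y i w) = s].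
Proof.
case: s => a b; rewrite (_ : [set w | _] = [set w | X i w = a] `&` [set w | Y i w = b]).
  exact: measurableI.
by apply/seteqP; split => w /= => [[-> ->]|[-> ->]].
Qed.

Lemma measurable_cylinder k s : measurable (cylinder k s).
Proof. by apply: bigcap_measurableType => i _; exact: measurable_state. Qed.

Lemma measurable_alive i : measurable (alive i).
Proof.
rewrite (_ : alive i = ~` [set w | X i w = 0%N] `&` ~` [set w | Y i w = 0%N]).
  by apply: measurableI; apply: measurableC.
by apply/seteqP; split => w; rewrite /alive /=; lia.
Qed.

Lemma measurable_alive_between k j : measurable (alive_between k j).
Proof. by apply: bigcap_measurableType => i _; exact: measurable_alive. Qed.

Lemma measurable_cylinder_alive_between k s j :
  measurable (cylinder k s `&` alive_between k j).
Proof. exact: measurableI (measurable_cylinder k s) (measurable_alive_between k j). Qed.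

End Events.

Section Survival.
Local Set Implicit Arguments.
Local Unset Strict Implicit.
Variables (R : realType) (p q e : R).
Hypotheses (p01 : 0 <= p <= 1) (q01 : 0 <= q <= 1) (e0 : 0 <= e) (e1 : e <= 1)
  (pgf1_le : min_pgf p q e 1 <= e).
Variables (d : measure_display) (T : measurableType d) (P : probability T R)
  (X Y : nat -> T -> nat).
Hypotheses (mX : forall n k, measurable [set w | X n w = k])
  (mY : forall n k, measurable [set w | Y n w = k]).

Definition path_weight k (s : nat -> nat * nat) : R :=
  (if s 0%N == (1%N, 1%N) then 1 else 0) * \prod_(i < k) coop_kernel p q (s i) (s i.+1).

Hypothesis law : forall k s, P (cylinder X Y k s) = (path_weight k s)%:E.

Definition extend_path (s : nat -> nat * nat) k (x : nat * nat) :=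
  fun i => if i == k.+1 then x else s i.

Definition survival_bound (s : nat * nat) : R := 1 - e ^+ minn s.1 s.2.

Lemma path_weight_ge0 k s : 0 <= path_weight k s.
Proof. by rewrite -lee_fin -law measure_ge0. Qed.

Lemma path_weight_extend k s x :
  path_weight k.+1 (extend_path s k x) = path_weight k s * coop_kernel p q (s k) x.
Proof.
rewrite /path_weight big_ord_recr /= /extend_path eqxx -mulrA (ltn_eqF (ltnSn k)).
congr (_ * (_ * _)); apply: eq_bigr => i _.
by rewrite !ltn_eqF ?ltnS // ltnW.
Qed.

Lemma survival_bound_le1 s : survival_bound s <= 1.
Proof. by rewrite /survival_bound lerBlDr lerDl exprn_ge0. Qed.

Lemma survival_bound_subharmonic s :
  survival_bound s <=
    \sum_(a < (2 * (s.1 + s.2)).+1) \sum_(b < (2 * minn s.1 s.2).+1)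
      coop_kernel p q s (a : nat, b : nat) * survival_bound (a : nat, b : nat).
Proof.
set rhs := (X in _ <= X).
have -> : rhs = bin_mean (2 * (s.1 + s.2)) q
                  (fun a => bin_mean (2 * minn s.1 s.2) p (fun b => survival_bound (a, b))).
  rewrite /rhs /bin_mean; apply: eq_bigr => a _; rewrite mulr_sumr.
  by apply: eq_bigr => b _; rewrite /coop_kernel mulrA.
rewrite /survival_bound; under eq_bin_mean => a do rewrite bin_meanBl.
by rewrite bin_meanBl lerD2l lerN2 kernel_min_pgf_le.
Qed.

Lemma cylinder_alive_betweenS_ge k s j :
  (\sum_(a < (2 * ((s k).1 + (s k).2)).+1) \sum_(b < (2 * minn (s k).1 (s k).2).+1)
     P (cylinder X Y k.+1 (extend_path s k (a : nat, b : nat))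
        `&` alive_between X Y k.+1 j `&` alive X Y k.+1)
   <= P (cylinder X Y k s `&` alive_between X Y k j.+1))%E.
Proof.
pose E a b := cylinder X Y k.+1 (extend_path s k (a, b))
               `&` alive_between X Y k.+1 j `&` alive X Y k.+1.
have mE a b : measurable (E a b).
  exact: measurableI (measurable_cylinder_alive_between mX mY _ _ _)
                     (measurable_alive mX mY _).
rewrite -(@measure_bigsetU_fibres _ _ _ P (fun w => (X k.+1 w, Y k.+1 w)) E) //;
  last by move=> a b w [[/(_ k.+1 (leqnn _))]]; rewrite /extend_path eqxx.
apply: le_measure; rewrite ?inE.
- by apply: bigsetU_measurable => a _; exact: bigsetU_measurable.
- exact: measurable_cylinder_alive_between.
rewrite alive_betweenS -bigcup_seq => w [a _]; rewrite -bigcup_seq.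
move=> -[b _ [[cyl_w between_w] alive_w]].
split=> // i ik; have := cyl_w i (leqW ik).
by rewrite /extend_path ltn_eqF ?ltnS.
Qed.

Lemma cylinder_survival_ge j k s :
  ((path_weight k s * survival_bound (s k))%:E
   <= P (cylinder X Y k s `&` alive_between X Y k j))%E.
Proof.
elim: j k s => [|j IH] k s.
  by rewrite alive_between0 setIT law lee_fin ler_piMr ?path_weight_ge0 ?survival_bound_le1.
apply: le_trans (cylinder_alive_betweenS_ge k s j).
apply: (@le_trans _ _ (\sum_(a < (2 * ((s k).1 + (s k).2)).+1)
    \sum_(b < (2 * minn (s k).1 (s k).2).+1) (path_weight k s *
      coop_kernel p q (s k) (a : nat, b : nat) * survival_bound (a : nat, b : nat))%:E)%E).
  under eq_bigr => a _ do rewrite sumEFin.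
  rewrite sumEFin lee_fin.
  apply: le_trans (ler_wpM2l (path_weight_ge0 k s) (survival_bound_subharmonic (s k))) _.
  rewrite mulr_sumr; apply: ler_sum => a _; rewrite mulr_sumr.
  by apply: ler_sum => b _; rewrite mulrA.
apply: lee_sum => a _; apply: lee_sum => b _; rewrite -path_weight_extend.
have [ab_dead|ab_alive] := posnP (minn a b).
  by rewrite /survival_bound /= ab_dead expr0 subrr mulr0 measure_ge0.
have := IH k.+1 (extend_path s k (a : nat, b : nat)).
rewrite /extend_path eqxx => /le_trans; apply.
apply: le_measure; rewrite ?inE.
- exact: measurable_cylinder_alive_between.
- exact: measurableI (measurable_cylinder_alive_between mX mY _ _ _)
                     (measurable_alive mX mY _).
move=> w [cyl_w between_w]; split => //.
by rewrite /alive /=; have := cyl_w k.+1 (leqnn _); rewrite /extend_path eqxx => -[-> ->].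
Qed.

Lemma survival_prob_ge : ((1 - e)%:E <= P [set w | forall n, alive X Y n w])%E.
Proof.
pose start : nat -> nat * nat := fun=> (1%N, 1%N).
pose F j := cylinder X Y 0 start `&` alive_between X Y 0 j.
have mF j : measurable (F j) by exact: measurable_cylinder_alive_between.
have F_ge j : ((1 - e)%:E <= P (F j))%E.
  have := cylinder_survival_ge j 0 start.
  by rewrite /path_weight /survival_bound big_ord0 eqxx mulr1 mul1r expr1.
have F_decr : nonincreasing_seq F.
  move=> n m nm; rewrite subsetEset => w [cyl_w between_w].
  by split=> // i /andP[i0 im]; apply: between_w; rewrite i0 (leq_trans im).
apply: le_trans (@nonincreasing_bigcap_ge _ _ _ P F _ mF F_decr F_ge) _.
apply: le_measure; rewrite ?inE.
- exact: bigcapT_measurable.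
- rewrite (_ : [set w | _] = \bigcap_n alive X Y n).
    by apply: bigcapT_measurable => n; exact: measurable_alive.
  by apply/seteqP; split=> w /= alive_w n => [_|]; apply: alive_w.
move=> w F_w [|n].
  by have [/(_ 0%N (leqnn _))] := F_w 0%N I; rewrite /alive /= => -[-> ->].
by have [_] := F_w n.+1 I; apply; rewrite /= add0n leqnn.
Qed.

End Survival.

Theorem mainTheorem16 (R : realType) (p q : R)
  (hp : 0 < p < 1) (hq : 0 < q < 1)
  (d : measure_display) (T : measurableType d) (P : probability T R)
  (X Y : nat -> T -> nat)
  (hX : forall n k, measurable [set w | X n w = k])
  (hY : forall n k, measurable [set w | Y n w = k])
  (hlaw : forall (n : nat) (s : nat -> nat * nat),
     P [set w | forall i, (i <= n)%N -> (X i w, Y i w) = s i]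
     = ((if s 0%N == (1%N, 1%N) then 1 else 0)
         * \prod_(i < n) coop_kernel p q (s i) (s i.+1))%:E)
  (hh : 1 < hpq p q) :
  (0 < P [set w | forall n, (0 < minn (X n w) (Y n w))%N])%E.
Proof.
have [e /andP[e0 e_lt1] pgf1_le] := min_pgf_fixed_point hp hq hh.
have p01 : 0 <= p <= 1 by case/andP: hp => p0 p1; rewrite !ltW.
have q01 : 0 <= q <= 1 by case/andP: hq => q0 q1; rewrite !ltW.
apply: lt_le_trans (survival_prob_ge p01 q01 e0 (ltW e_lt1) pgf1_le hX hY hlaw).
by rewrite lte_fin subr_gt0.
Qed.
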